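(* Let $P$ be a finite poset and $\alpha:P\to\mathbb{N}$ an isotone map; for $i\in\mathbb{N}$ let $I_i=\alpha^{-1}(\{0,1,\dots,i\})$. Then the principal letterplace ideal $L(\alpha,P)$ is generated by the monomials $m_\phi=\prod_{j=0}^{i}x_{\phi(j),j}$, where $i\in\mathbb{N}$ and $\phi:\{0<1<\dots<i\}\to P$ is an isotone map with $\phi(i)\in I_i$. The minimal generators of $L(\alpha,P)$ are the $m_\phi$ for such $\phi$ which moreover satisfy $\phi(j)\notin I_j$ for all $j<i$.
   Context: $\mathbb{N}=\{0,1,2,\dots\}$; $\mathrm{Hom}(P,\mathbb{N})$ is the set of isotone maps $P\to\mathbb{N}$ ordered pointwise. The ascent of $\psi\in\mathrm{Hom}(P,\mathbb{N})$ is $\Lambda\psi=\{(p,i)\in P\times\mathbb{N}: \psi(q)\le i<\psi(p)\ \forall q<p\}$. $k$ is a field and $k[x_{P\times\mathbb{N}}]$ the polynomial ring in variables $x_{p,i}$; $m_T=\prod_{t\in T}x_t$. For a poset ideal $\mathcal{J}\subseteq\mathrm{Hom}(P,\mathbb{N})$ with complement $\mathcal{J}^c$, the letterplace ideal $L(\mathcal{J},P)$ is generated by $m_{\Lambda\psi}$, $\psi\in\mathcal{J}^c$. For isotone $\alpha$, $\mathcal{J}(\alpha)=\{\psi\in\mathrm{Hom}(P,\mathbb{N}):\psi\le\alpha\}$ and $L(\alpha,P)=L(\mathcal{J}(\alpha),P)$. *)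

From HB Require Import structures.
From mathcomp Require Import all_boot all_order all_algebra.
From mathcomp Require Import finmap.
From mathcomp Require Import monalg.

Set Implicit Arguments.
Unset Strict Implicit.
Unset Printing Implicit Defensive.

Import Order.TTheory GRing.Theory.
Local Open Scope ring_scope.

Definition polyring (k : fieldType) (V : choiceType) := {malg k[{cmonom V}]}.

Definition var (k : fieldType) (V : choiceType) (t : V) : polyring k V :=
  << ucm t >>.

Definition ideal_gen (R : comNzRingType) (S : R -> Prop) : R -> Prop :=
  fun r => exists (n : nat) (c g : 'I_n -> R),
      (forall j, S (g j)) /\ r = \sum_(j < n) c j * g j.

Definition is_monomial (k : fieldType) (V : choiceType) (f : polyring k V) :=
  exists m : {cmonom V}, f = << m >>.

Arguments var k {V} t.

Definition minimal_generators (k : fieldType) (V : choiceType)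
    (I : polyring k V -> Prop) : polyring k V -> Prop :=
  fun u => [/\ is_monomial u, I u &
     forall v, is_monomial v -> I v -> (exists r, u = r * v) -> v = u].

Definition isotone (d : Order.disp_t) (P : porderType d) (f : P -> nat) :=
  forall x y : P, (x <= y)%O -> (f x <= f y)%N.

Definition isotone_ord (d : Order.disp_t) (P : porderType d) (n : nat)
    (phi : 'I_n -> P) :=
  forall j j' : 'I_n, (j <= j')%N -> (phi j <= phi j')%O.

Definition ascent (d : Order.disp_t) (P : finPOrderType d) (psi : P -> nat)
    (t : P * nat) : bool :=
  (t.2 < psi t.1)%N && [forall q : P, (q < t.1)%O ==> (psi q <= t.2)%N].

(* m_{Lambda psi} = prod_{t in Lambda psi} x_t  (Lambda psi is contained in
   {(p,i) : i < psi p}, a finite set) *)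
Definition m_ascent (k : fieldType) (d : Order.disp_t) (P : finPOrderType d)
    (psi : P -> nat) : polyring k (P * nat)%type :=
  \prod_(p : P) \prod_(i < psi p | ascent psi (p, val i)) var k (p, val i).

Arguments m_ascent k {d P} psi.

Definition letterplace (k : fieldType) (d : Order.disp_t) (P : finPOrderType d)
    (J : (P -> nat) -> Prop) : polyring k (P * nat)%type -> Prop :=
  ideal_gen (fun f => exists psi : P -> nat,
                [/\ isotone psi, ~ J psi & f = m_ascent k psi]).

Arguments letterplace k {d P} J _.

Definition Jalpha (d : Order.disp_t) (P : finPOrderType d) (alpha : P -> nat) :
    (P -> nat) -> Prop :=
  fun psi => isotone psi /\ forall p, (psi p <= alpha p)%N.

Definition letterplace_alpha (k : fieldType) (d : Order.disp_t)
    (P : finPOrderType d) (alpha : P -> nat) :=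
  letterplace k (Jalpha alpha).

Arguments letterplace_alpha k {d P} alpha _.

Definition Ipre (d : Order.disp_t) (P : finPOrderType d) (alpha : P -> nat)
    (i : nat) : pred P := fun p => (alpha p <= i)%N.

Definition m_phi (k : fieldType) (d : Order.disp_t) (P : finPOrderType d)
    (i : nat) (phi : 'I_i.+1 -> P) : polyring k (P * nat)%type :=
  \prod_(j < i.+1) var k (phi j, val j).

Arguments m_phi k {d P i} phi.

(* Every m_psi and every m_phi is squarefree, so each divisibility below is an
   inclusion of supports.  If alpha (phi i) <= i, then psi p = max {j + 1 | phi j <= p}
   is isotone, exceeds alpha at phi i, and its ascent lies on the graph
   {(phi j, j)} of phi; so m_psi divides m_phi.  Conversely, if psi p > alpha p = i,
   choose for t = i, i - 1, ..., 0 a minimal q below the previous choice with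
   t < psi q: then (q, t) lies in the ascent of psi, and these choices form an
   isotone phi with phi i <= p, hence phi i in I_i, whose graph lies in the ascent;
   so m_phi divides m_psi.  Finally m_phi' divides m_phi only when phi' is a prefix
   of phi, so m_phi is a minimal generator exactly when no proper prefix of phi
   already ends in the corresponding I_j. *)

From HB Require Import structures.
From mathcomp Require Import all_boot all_order all_algebra.
From mathcomp Require Import finmap.
From mathcomp Require Import monalg.
Import Order.TTheory GRing.Theory.
Set Implicit Arguments.
Unset Strict Implicit.
Unset Printing Implicit Defensive.
Local Open Scope ring_scope.

Section IdealGen.
Variable R : comNzRingType.

Lemma ideal_gen_base (S : R -> Prop) g : S g -> ideal_gen S g.
Proof. by exists 1%N, (fun=> 1), (fun=> g); rewrite big_ord1 mul1r. Qed.

Lemma ideal_gen_sub (S S' : R -> Prop) :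
    (forall g, S g -> exists r h, S' h /\ g = r * h) ->
  forall f, ideal_gen S f -> ideal_gen S' f.
Proof.
move=> SS' _ [n [c [g [Sg ->]]]].
have /fin_all_exists [rh Erh] : forall j, exists rh : R * R, S' rh.2 /\ g j = rh.1 * rh.2.
  by move=> j; have [r [h [S'h ->]]] := SS' _ (Sg j); exists (r, h).
exists n, (fun j => c j * (rh j).1), (fun j => (rh j).2); split=> [j|].
  by case: (Erh j).
by apply: eq_bigr => j _; case: (Erh j) => _ ->; rewrite mulrA.
Qed.

Lemma eq_ideal_gen (S S' : R -> Prop) :
  (forall g, S g <-> S' g) -> forall f, ideal_gen S f <-> ideal_gen S' f.
Proof.
by move=> eqS f; split; apply: ideal_gen_sub => g /eqS S'g; exists 1, g; rewrite mul1r.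
Qed.

End IdealGen.

Section MonomialIdeals.
Variables (k : fieldType) (V : choiceType).
Local Notation R := (polyring k V).
Implicit Types (m n s : {cmonom V}) (r u v : R).

Lemma malgUM m n : << m >> * << n >> = << mmul m n >> :> R.
Proof. by rewrite malgM_def fgmulUU mulr1. Qed.

Lemma prod_malgU (I : Type) (rs : seq I) (Q : pred I) (F : I -> {cmonom V}) :
  \prod_(x <- rs | Q x) << F x >> = << \big[mmul/mone]_(x <- rs | Q x) F x >> :> R.
Proof.
have malgU1 : << mone >> = 1 :> R by rewrite -mpolyC1E.
by rewrite (big_morph (fun m => << m >> : R) (fun m n => esym (malgUM m n)) malgU1).
Qed.

Lemma malgU_dvd m n : (forall x, m x <= n x)%N -> exists r, << n >> = r * << m >>.
Proof.
move=> le_mn; exists << divcm n m >>; rewrite malgUM; congr << _ >>.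
by apply/eqP/cmP => x; rewrite cmM divcmE subnK.
Qed.

Lemma mcoeffMU_multiple r n m : (r * << n >>)@_m != 0 -> exists s, m = mmul s n.
Proof.
rewrite mcoeffMr msuppU1 big_seq_fset1.
case: (boolP [exists s : msupp r, mmul (val s) n == m]) => [/existsP[s /eqP <-]|].
  by exists (val s).
rewrite negb_exists => /forallP nm; rewrite big1_fset ?eqxx // => s rs _.
by have := nm [` rs]%fset; rewrite /= => /negbTE ->; rewrite mulr0n.
Qed.

Lemma malgU_dvd_cm m n r : << m >> = r * << n >> -> exists s, m = mmul s n.
Proof.
by move=> Emn; apply: (@mcoeffMU_multiple r); rewrite -Emn mcoeffU1 eqxx oner_neq0.
Qed.

Lemma monomial_dvd_antisym u v r r' :
  is_monomial u -> is_monomial v -> u = r * v -> v = r' * u -> u = v.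
Proof.
move=> [m ->] [n ->] /malgU_dvd_cm [s ->] /malgU_dvd_cm [s' Em].
suff -> : s = mone by rewrite mul1m.
have := congr1 mdeg Em; rewrite !mdegM addnA -{1}[mdeg n]add0n => /addIn/esym/eqP.
by rewrite addn_eq0 !mdeg_eq0 => /andP[_ /eqP ->].
Qed.

Lemma monomial_ideal_gen (S : R -> Prop) v :
    (forall g, S g -> is_monomial g) -> is_monomial v -> ideal_gen S v ->
  exists g s, S g /\ v = << s >> * g.
Proof.
move=> Smon [m ->] [n [c [g [Sg Em]]]].
have [j] : exists j, (c j * g j)@_m != 0.
  apply/existsP; apply: contraTT (oner_neq0 k) => /existsPn c0.
  have <- : (<< m >> : R)@_m = 1 by rewrite mcoeffU1 eqxx.
  by rewrite Em raddf_sum big1 ?eqxx // => j _; apply/eqP/negPn/c0.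
have [n' Eg] := Smon _ (Sg j); rewrite Eg => /mcoeffMU_multiple[s ->].
(* Closing this goal by conversion instead makes Rocq unfold two different ring
   instances on polyring k V, which does not terminate in practice. *)
by exists (g j), s; split; [exact: Sg | rewrite Eg; exact: esym (malgUM s n')].
Qed.

Lemma minimal_generators_ideal_gen (S : R -> Prop) u :
    (forall g, S g -> is_monomial g) ->
  minimal_generators (ideal_gen S) u <->
  S u /\ (forall v, S v -> (exists r, u = r * v) -> v = u).
Proof.
move=> Smon; split.
  case=> mon_u Iu min_u; have [g [s [Sg Eu]]] := monomial_ideal_gen Smon mon_u Iu.
  have gu : g = u by apply: min_u (Smon _ Sg) (ideal_gen_base Sg) _; exists << s >>.
  by split=> [|v Sv]; [rewrite -gu | apply: min_u (Smon _ Sv) (ideal_gen_base Sv)].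
case=> Su min_u; split=> [||v mon_v Iv [r Eu]]; [exact: Smon | exact: ideal_gen_base|].
have [g [s [Sg Ev]]] := monomial_ideal_gen Smon mon_v Iv.
have gu : g = u by apply: min_u Sg _; exists (r * << s >>); rewrite Eu Ev; exact: mulrA.
by rewrite gu in Ev; apply: monomial_dvd_antisym mon_v (Smon _ Su) Ev Eu.
Qed.

Lemma eq_minimal_generators (I J : R -> Prop) :
  (forall f, I f <-> J f) -> forall u, minimal_generators I u <-> minimal_generators J u.
Proof.
move=> IJ u; split=> -[mon_u Iu min_u]; split=> //.
- exact: (IJ u).1.
- by move=> v mon_v /IJ; apply: min_u.
- exact: (IJ u).2.
- by move=> v mon_v /IJ; apply: min_u.
Qed.



End MonomialIdeals.

Lemma cm_prod (V : choiceType) (I : Type) (rs : seq I) (Q : pred I)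
    (F : I -> {cmonom V}) y :
  (\big[mmul/mone]_(x <- rs | Q x) F x) y = (\sum_(x <- rs | Q x) F x y)%N.
Proof. exact: (big_morph (fun m : {cmonom V} => m y) (fun m n => cmM y m n) (cm1 y)). Qed.

Lemma sum_ord_pred1 n t (b : nat -> bool) :
  (\sum_(j < n) ((val j == t) && b j) = (t < n) && b t)%N.
Proof.
have [lt_tn|le_nt] := ltnP t n; last first.
  by rewrite big1 // => j _; rewrite ltn_eqF // (leq_trans (ltn_ord j) le_nt).
rewrite (bigD1 (Ordinal lt_tn)) //= eqxx big1 ?addn0 // => j.
by rewrite -val_eqE /= => /negbTE ->.
Qed.

Section Chains.
Variables (d : Order.disp_t) (P : finPOrderType d).
Implicit Types (f : nat -> P) (psi : P -> nat).

(* An isotone map {0 < ... < i} -> P, as a function on nat whose values beyond i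
   are irrelevant. *)
Definition chain (i : nat) f :=
  forall j j', (j <= j')%N -> (j' <= i)%N -> (f j <= f j')%O.

Lemma chain_le i i' f : (i' <= i)%N -> chain i f -> chain i' f.
Proof. by move=> le_i'i cf j j' le_jj' le_j'i'; apply: cf (leq_trans le_j'i' le_i'i). Qed.

Lemma chain_rcons i f q : chain i f -> (f i <= q)%O ->
  chain i.+1 (fun j => if (j <= i)%N then f j else q).
Proof.
move=> cf le_fiq j j' le_jj' le_j'i.
have [le_j'i'|lt_ij'] := leqP j' i; first by rewrite (leq_trans le_jj' le_j'i') cf.
case: leqP => [le_ji|_]; last exact: lexx.
exact: le_trans (cf _ _ le_ji (leqnn i)) le_fiq.
Qed.

(* The least isotone psi with j < psi (f j) for all j <= i. *)
Definition chain_rank (i : nat) f (p : P) : nat :=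
  \max_(j < i.+1 | (f j <= p)%O) j.+1.

Lemma chain_rank_isotone i f : isotone (chain_rank i f).
Proof.
move=> p p' le_pp'; apply/bigmax_leqP => j le_fjp.
by apply: leq_bigmax_cond; apply: le_trans le_pp'.
Qed.

Lemma chain_rank_gt i f p j : (j <= i)%N -> (f j <= p)%O -> (j < chain_rank i f p)%N.
Proof.
by rewrite -ltnS => lt_ji le_fjp; apply: (@leq_bigmax_cond _ _ _ (Ordinal lt_ji)).
Qed.

Lemma ascent_chain_rank i f p t : chain i f ->
  ascent (chain_rank i f) (p, t) -> (t <= i)%N /\ f t = p.
Proof.
move=> cf /andP[/= lt_tp /forallP below_p].
have [j /andP[le_fjp le_tj]] : exists j : 'I_i.+1, (f j <= p)%O && (t <= j)%N.
  apply/existsP; apply: contraLR lt_tp; rewrite negb_exists -leqNgt => /forallP nj.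
  by apply/bigmax_leqP => j le_fjp; move: (nj j); rewrite le_fjp /= -ltnNge.
have le_ji : (j <= i)%N by rewrite -ltnS.
have le_ftp : (f t <= p)%O := le_trans (cf _ _ le_tj le_ji) le_fjp.
split; first exact: leq_trans le_tj le_ji.
move: le_ftp; rewrite le_eqVlt => /predU1P[//|lt_ftp].
by have := below_p (f t); rewrite lt_ftp /= leqNgt chain_rank_gt // (leq_trans le_tj le_ji).
Qed.

Lemma ascent_below psi p t : (t < psi p)%N ->
  exists2 q, (q <= p)%O & ascent psi (q, t).
Proof.
move=> lt_tp; pose below (q : P) := #|[pred x | (x < q)%O]|.
have Pp : (p <= p)%O && (t < psi p)%N by rewrite lexx.
have [q /andP[le_qp lt_tq] min_q] :=
  arg_minnP (P := fun q => (q <= p)%O && (t < psi q)%N) below Pp.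
exists q => //; rewrite /ascent /= lt_tq; apply/forall_inP => q' lt_q'q.
rewrite leqNgt; apply/negP => lt_tq'.
have := min_q q'; rewrite (le_trans (ltW lt_q'q) le_qp) lt_tq' => /(_ isT).
rewrite leqNgt => /negP; apply; apply: proper_card; apply/properP.
split; last by exists q'; rewrite !inE ?ltxx.
by apply/subsetP => x; rewrite !inE => /lt_trans; apply.
Qed.

Lemma ascent_chain psi p t : (t < psi p)%N -> exists f,
  [/\ chain t f, (f t <= p)%O & forall j, (j <= t)%N -> ascent psi (f j, j)].
Proof.
elim: t p => [|t IHt] p /ascent_below [q le_qp asc_q].
  by exists (fun=> q); split=> // j; rewrite leqn0 => /eqP->.
have [f [cf le_ftq asc_f]] := IHt q (ltnW (proj1 (andP asc_q))).
exists (fun j => if (j <= t)%N then f j else q); split.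
- exact: chain_rcons.
- by rewrite ltnn.
- by move=> j; rewrite leq_eqVlt ltnS => /predU1P[->|le_jt]; rewrite ?ltnn ?le_jt ?asc_f.
Qed.

Definition chain_mon (i : nat) f : {cmonom (P * nat)%type} :=
  \big[mmul/mone]_(j < i.+1) ucm (f j, val j).

Lemma chain_monE i f p t : chain_mon i f (p, t) = ((t <= i)%N && (f t == p)) :> nat.
Proof.
rewrite cm_prod -ltnS -(sum_ord_pred1 _ _ (fun j => f j == p)).
by apply: eq_bigr => j _; rewrite cmU xpair_eqE andbC.
Qed.

Definition ascent_mon psi : {cmonom (P * nat)%type} :=
  \big[mmul/mone]_(p : P)
    \big[mmul/mone]_(i < psi p | ascent psi (p, val i)) ucm (p, val i).

Lemma ascent_monE psi q t : ascent_mon psi (q, t) = ascent psi (q, t) :> nat.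
Proof.
rewrite cm_prod (bigD1 q) //= [X in (_ + X)%N]big1 ?addn0 => [|p neq_pq]; last first.
  by rewrite cm_prod big1 // => i _; rewrite cmU xpair_eqE (negbTE neq_pq).
rewrite cm_prod big_mkcond /=.
pose b (i : 'I_(psi q)) : nat := (val i == t) && ascent psi (q, val i).
rewrite (eq_bigr b) => [|i _].
  by rewrite /b (sum_ord_pred1 _ _ (fun i => ascent psi (q, i))) andb_idl // => /andP[].
by rewrite /b cmU xpair_eqE eqxx; case: ascent; rewrite ?andbT ?andbF.
Qed.

End Chains.

Section Letterplace.
Variables (k : fieldType) (d : Order.disp_t) (P : finPOrderType d).
Local Notation R := (polyring k (P * nat)%type).
Implicit Types (f g : nat -> P) (psi : P -> nat).

Definition m_chain (i : nat) f : R := m_phi k (fun j : 'I_i.+1 => f j).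

Lemma m_chainE i f : m_chain i f = << chain_mon i f >>.
Proof. exact: prod_malgU. Qed.

Lemma m_ascentE psi : m_ascent k psi = << ascent_mon psi >>.
Proof. by rewrite /m_ascent; under eq_bigr do rewrite prod_malgU; rewrite prod_malgU. Qed.

Lemma m_chain_prefix i i' f : (i' <= i)%N -> exists r, m_chain i f = r * m_chain i' f.
Proof.
move=> le_i'i; rewrite !m_chainE; apply: malgU_dvd => -[p t]; rewrite !chain_monE.
by case: andP => //= -[le_ti' ->]; rewrite (leq_trans le_ti' le_i'i).
Qed.

Lemma m_chain_dvd_prefix i i' f g r : m_chain i f = r * m_chain i' g ->
  (i' <= i)%N /\ forall j, (j <= i')%N -> g j = f j.
Proof.
rewrite !m_chainE => /malgU_dvd_cm[s Es].
suff agree j : (j <= i')%N -> (j <= i)%N /\ g j = f j.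
  by split=> [|j /agree[]//]; case: (agree i').
move=> le_ji'; have : (0 < chain_mon i f (g j, j))%N.
  by rewrite Es cmM chain_monE le_ji' eqxx addn1.
by rewrite chain_monE lt0b => /andP[-> /eqP].
Qed.

Lemma m_ascent_mult_m_chain psi i f : (forall j, (j <= i)%N -> ascent psi (f j, j)) ->
  exists r, m_ascent k psi = r * m_chain i f.
Proof.
move=> asc_f; rewrite m_chainE m_ascentE; apply: malgU_dvd => -[p t].
rewrite chain_monE ascent_monE; case: andP => // -[le_ti /eqP <-].
by rewrite asc_f.
Qed.

Lemma m_chain_mult_m_ascent i f : chain i f ->
  exists r, m_chain i f = r * m_ascent k (chain_rank i f).
Proof.
move=> cf; rewrite m_chainE m_ascentE; apply: malgU_dvd => -[p t].
rewrite chain_monE ascent_monE; case asc: ascent => //.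
by have [-> <-] := ascent_chain_rank cf asc; rewrite eqxx.
Qed.

Lemma chain_isotone_ord i f : chain i f -> isotone_ord (fun j : 'I_i.+1 => f j).
Proof. by move=> cf j j' le_jj'; apply: cf; rewrite // -ltnS. Qed.

Lemma isotone_ord_chain i (phi : 'I_i.+1 -> P) : isotone_ord phi ->
  exists f, [/\ chain i f, forall j : 'I_i.+1, f j = phi j & m_phi k phi = m_chain i f].
Proof.
move=> phi_isotone; have f_phi (j : 'I_i.+1) : phi (inord j) = phi j by rewrite inord_val.
exists (fun n => phi (inord n)); split; [|exact: f_phi|].
  move=> j j' le_jj' le_j'i; apply: phi_isotone.
  by rewrite !inordK // ltnS (leq_trans le_jj').
by apply: eq_bigr => j _; rewrite f_phi.
Qed.

Section PrincipalLetterplace.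
Variable alpha : P -> nat.
Hypothesis alpha_isotone : isotone alpha.

Definition chain_gen (u : R) :=
  exists i f, [/\ chain i f, (alpha (f i) <= i)%N & u = m_chain i f].

Lemma letterplace_alphaE u : letterplace_alpha k alpha u <-> ideal_gen chain_gen u.
Proof.
split; apply: ideal_gen_sub => g.
  case=> psi [psi_isotone psi_notJ ->].
  have [p lt_alpha_psi] : exists p, (alpha p < psi p)%N.
    apply/existsP; apply: contraT => /existsPn le_psi_alpha.
    by case: psi_notJ; split=> // p; rewrite leqNgt le_psi_alpha.
  have [f [cf le_fp asc_f]] := ascent_chain lt_alpha_psi.
  have [r ->] := m_ascent_mult_m_chain asc_f.
  exists r, (m_chain (alpha p) f); split=> //.
  by exists (alpha p), f; split=> //; apply: alpha_isotone.
case=> i [f [cf le_alpha ->]]; have [r ->] := m_chain_mult_m_ascent cf.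
exists r, (m_ascent k (chain_rank i f)); split=> //.
exists (chain_rank i f); split=> //; first exact: chain_rank_isotone.
case=> _ /(_ (f i)); apply/negP; rewrite -ltnNge.
exact: leq_ltn_trans le_alpha (chain_rank_gt (leqnn i) (lexx (f i))).
Qed.

Definition minimal_chain_gen (u : R) :=
  exists i f, [/\ chain i f, (alpha (f i) <= i)%N,
                  forall j, (j < i)%N -> (j < alpha (f j))%N & u = m_chain i f].

Lemma chain_gen_minimal u :
  chain_gen u /\ (forall v, chain_gen v -> (exists r, u = r * v) -> v = u) <->
  minimal_chain_gen u.
Proof.
split.
  case=> -[i [f [cf le_alpha ->]]] min_u.
  have ex_entry : exists j, (alpha (f j) <= j)%N by exists i.
  have [i0 le_alpha0 min_i0] := ex_minnP ex_entry.
  have le_i0i := min_i0 i le_alpha.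
  exists i0, f; split=> //.
  - exact: chain_le le_i0i cf.
  - by move=> j; apply: contraTT; rewrite -!leqNgt; apply: min_i0.
  - apply/esym/min_u; last exact: m_chain_prefix.
    by exists i0, f; split=> //; apply: chain_le le_i0i cf.
case=> i [f [cf le_alpha notI ->]]; split; first by exists i, f.
move=> _ [i' [g [cg le_alpha' ->]]] [r /m_chain_dvd_prefix[le_i'i agree]].
have Ei : i' = i.
  apply/eqP; rewrite eqn_leq le_i'i leqNgt; apply/negP => /notI.
  by rewrite -agree // ltnNge le_alpha'.
by subst i'; apply: eq_bigr => j _; rewrite agree // -ltnS.
Qed.

Lemma minimal_generators_letterplace_alpha u :
  minimal_generators (letterplace_alpha k alpha) u <-> minimal_chain_gen u.
Proof.
rewrite -chain_gen_minimal -minimal_generators_ideal_gen.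
  exact: eq_minimal_generators letterplace_alphaE u.
by move=> _ [i [f [_ _ ->]]]; rewrite m_chainE; exists (chain_mon i f).
Qed.

Lemma chain_gen_ordE u : chain_gen u <->
  exists i (phi : 'I_i.+1 -> P),
    [/\ isotone_ord phi, phi ord_max \in Ipre alpha i & u = m_phi k phi].
Proof.
split=> -[i].
  case=> f [cf le_alpha ->]; exists i, (fun j => f j).
  by split=> //; apply: chain_isotone_ord.
case=> phi [phi_isotone le_alpha ->].
have [f [cf f_phi ->]] := isotone_ord_chain phi_isotone.
by exists i, f; split=> //; rewrite (f_phi ord_max).
Qed.

Lemma minimal_chain_gen_ordE u : minimal_chain_gen u <->
  exists i (phi : 'I_i.+1 -> P),
    [/\ isotone_ord phi, phi ord_max \in Ipre alpha i,
        forall j : 'I_i.+1, (j < i)%N -> phi j \notin Ipre alpha j & u = m_phi k phi].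
Proof.
split=> -[i].
  case=> f [cf le_alpha notI ->]; exists i, (fun j => f j); split=> //.
    exact: chain_isotone_ord.
  by move=> j /notI; rewrite -ltnNge.
case=> phi [phi_isotone le_alpha notI ->].
have [f [cf f_phi ->]] := isotone_ord_chain phi_isotone.
exists i, f; split=> //; first by rewrite (f_phi ord_max).
move=> j lt_ji; have := notI (Ordinal (leqW lt_ji)) lt_ji.
by rewrite -f_phi -ltnNge.
Qed.

End PrincipalLetterplace.

End Letterplace.

Theorem theorem4p7 (k : fieldType) (d : Order.disp_t) (P : finPOrderType d)
    (alpha : P -> nat) (Halpha : isotone alpha) :
  (forall f : polyring k (P * nat)%type,
      letterplace_alpha k alpha f <->
      ideal_gen (fun g => exists (i : nat) (phi : 'I_i.+1 -> P),
                   [/\ isotone_ord phi, phi ord_max \in Ipre alpha i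
                     & g = m_phi k phi]) f)
  /\
  (forall f : polyring k (P * nat)%type,
      minimal_generators (letterplace_alpha k alpha) f <->
      exists (i : nat) (phi : 'I_i.+1 -> P),
        [/\ isotone_ord phi, phi ord_max \in Ipre alpha i,
            (forall j : 'I_i.+1, (j < i)%N -> phi j \notin Ipre alpha j)
          & f = m_phi k phi]).
Proof.
split=> u.
  rewrite (letterplace_alphaE Halpha); exact: eq_ideal_gen (chain_gen_ordE alpha) u.
rewrite (minimal_generators_letterplace_alpha Halpha); exact: minimal_chain_gen_ordE.
Qed.
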